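(* Let $\kappa\in[1/2,1)$ and let $T$ be a rooted binary tree with $n\ge1$ leaves in which every internal node has exactly two children and, at every internal node, $L\le\kappa N$ and $R\le\kappa N$, where $L$ and $R$ are the numbers of leaves in its left and right subtrees and $N=L+R$. Then the sum, over all leaves of $T$, of their depths is at most $\dfrac{n\log n}{H(\kappa)}$, where $H(\kappa)=-\kappa\log\kappa-(1-\kappa)\log(1-\kappa)$ (with the same logarithm base in numerator and $H$).
   Context: The depth of a leaf is the number of edges on the path from the root to that leaf. *)

From Stdlib Require Import Reals List.
Import ListNotations.
Open Scope R_scope.

Inductive tree : Type :=
| Leaf : tree
| Node : tree -> tree -> tree.

Fixpoint leaves (t : tree) : nat :=
  match t with
  | Leaf => 1%nat
  | Node l r => (leaves l + leaves r)%nat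
  end.

Fixpoint leaf_depths (t : tree) : list nat :=
  match t with
  | Leaf => [0%nat]
  | Node l r => map S (leaf_depths l ++ leaf_depths r)
  end.

Definition sum_leaf_depths (t : tree) : nat :=
  fold_right Nat.add 0%nat (leaf_depths t).

Fixpoint kappa_balanced (kappa : R) (t : tree) : Prop :=
  match t with
  | Leaf => True
  | Node l r =>
      INR (leaves l) <= kappa * INR (leaves l + leaves r) /\
      INR (leaves r) <= kappa * INR (leaves l + leaves r) /\
      kappa_balanced kappa l /\ kappa_balanced kappa r
  end.

Definition Hent (kappa : R) : R :=
  - kappa * ln kappa - (1 - kappa) * ln (1 - kappa).

From Stdlib Require Import Reals List Lra Lia.
Open Scope R_scope.

(* Write S(t) for the sum of leaf depths and n(t) for the number
   of leaves.  Splitting a tree at its root, every leaf gets one edge deeper,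
   so S(Node l r) = S(l) + S(r) + n.  We prove S(t) * H(kappa) <= n ln n by
   induction on t; the inductive step reduces to the "chain rule" inequality
     N * H(kappa) <= N ln N - L ln L - R ln R        (N = L + R),
   whose right-hand side equals N * H(L/N).  Since L/N lies in [1-kappa, kappa]
   and H is symmetric about 1/2 and decreasing on [1/2, 1), H(L/N) >= H(kappa).
   The file first collects elementary facts on ln, then the needed properties
   of the binary entropy Hent, then the combinatorics of leaf depths, and
   finally the induction and the theorem (dividing by H(kappa) > 0). *)

Lemma ln_le_sub_1 y : 0 < y -> ln y <= y - 1.
Proof.
  intros Hy. pose proof (exp_ineq1_le (ln y)) as Hexp.
  rewrite exp_ln in Hexp; lra.
Qed.

Lemma ln_le_compat x y : 0 < x -> x <= y -> ln x <= ln y.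
Proof.
  intros Hx [Hlt | ->].
  - left; apply ln_increasing; lra.
  - lra.
Qed.

Lemma ln_div_pos x y : 0 < x -> 0 < y -> ln (x / y) = ln x - ln y.
Proof.
  intros Hx Hy. unfold Rdiv.
  rewrite ln_mult, ln_Rinv by (try apply Rinv_0_lt_compat; lra). ring.
Qed.

Lemma div_le_of_le_mul x y c : 0 < y -> x <= c * y -> x / y <= c.
Proof.
  intros Hy Hx. apply (Rmult_le_reg_r y); [lra |].
  unfold Rdiv; rewrite Rmult_assoc, Rinv_l by lra. lra.
Qed.

Lemma le_div_of_mul_le x y c : 0 < c -> x * c <= y -> x <= y / c.
Proof.
  intros Hc Hx. apply (Rmult_le_reg_r c); [lra |].
  unfold Rdiv; rewrite Rmult_assoc, Rinv_l by lra. lra.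
Qed.

(* Convexity of x ln x, in tangent-line form at y; it drives the monotonicity
   of the entropy. *)
Lemma xlnx_tangent x y : 0 < x -> 0 < y ->
  (x - y) * (ln y + 1) <= x * ln x - y * ln y.
Proof.
  intros Hx Hy.
  assert (Hratio : ln y - ln x <= y / x - 1).
  { rewrite <- ln_div_pos by lra. apply ln_le_sub_1, Rdiv_lt_0_compat; lra. }
  assert (Hscaled : x * (ln y - ln x) <= y - x).
  { replace (y - x) with (x * (y / x - 1)) by (field; lra).
    apply Rmult_le_compat_l; lra. }
  lra.
Qed.

Lemma Hent_sym p : Hent (1 - p) = Hent p.
Proof. unfold Hent. replace (1 - (1 - p)) with p by ring. ring. Qed.

Lemma Hent_antitone p q : / 2 <= p -> p <= q -> q < 1 -> Hent q <= Hent p.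
Proof.
  intros Hp Hpq Hq. unfold Hent.
  pose proof (xlnx_tangent q p ltac:(lra) ltac:(lra)).
  pose proof (xlnx_tangent (1 - q) (1 - p) ltac:(lra) ltac:(lra)).
  assert (Hln : ln (1 - p) <= ln p) by (apply ln_le_compat; lra).
  assert (0 <= (q - p) * (ln p - ln (1 - p))) by (apply Rmult_le_pos; lra).
  lra.
Qed.

Lemma Hent_ge_endpoint k p : / 2 <= k < 1 -> 1 - k <= p <= k -> Hent k <= Hent p.
Proof.
  intros Hk Hp. destruct (Rle_lt_dec (/ 2) p) as [Hhalf | Hhalf].
  - apply Hent_antitone; lra.
  - rewrite <- (Hent_sym p). apply Hent_antitone; lra.
Qed.

Lemma Hent_pos k : / 2 <= k < 1 -> 0 < Hent k.
Proof.
  intros Hk. unfold Hent.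
  assert (ln k <= 0) by (rewrite <- ln_1; apply ln_le_compat; lra).
  assert (ln (1 - k) < 0) by (rewrite <- ln_1; apply ln_increasing; lra).
  nra.
Qed.

(* Chain rule of entropy for a split of a + b into the parts a and b. *)
Lemma Hent_split a b : 0 < a -> 0 < b ->
  (a + b) * Hent (a / (a + b)) = (a + b) * ln (a + b) - a * ln a - b * ln b.
Proof.
  intros Ha Hb. unfold Hent.
  replace (1 - a / (a + b)) with (b / (a + b)) by (field; lra).
  rewrite !ln_div_pos by lra. field. lra.
Qed.

Lemma balanced_split_bound k a b : / 2 <= k < 1 -> 0 < a -> 0 < b ->
  a <= k * (a + b) -> b <= k * (a + b) ->
  (a + b) * Hent k <= (a + b) * ln (a + b) - a * ln a - b * ln b.
Proof.
  intros Hk Ha Hb Hak Hbk. rewrite <- Hent_split by lra.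
  apply Rmult_le_compat_l; [lra |].
  apply Hent_ge_endpoint; [exact Hk | split].
  - assert (b / (a + b) <= k) by (apply div_le_of_le_mul; lra).
    replace (a / (a + b)) with (1 - b / (a + b)) by (field; lra). lra.
  - apply div_le_of_le_mul; lra.
Qed.

Lemma leaves_pos t : (1 <= leaves t)%nat.
Proof. induction t; simpl; lia. Qed.

Lemma length_leaf_depths t : length (leaf_depths t) = leaves t.
Proof. induction t; simpl; [reflexivity |]. rewrite length_map, length_app; lia. Qed.

Lemma list_sum_map_S l : list_sum (map S l) = (list_sum l + length l)%nat.
Proof. induction l; simpl; lia. Qed.

Lemma sum_leaf_depths_Node l r :
  sum_leaf_depths (Node l r) =
  (sum_leaf_depths l + sum_leaf_depths r + leaves (Node l r))%nat.
Proof.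
  change (list_sum (map S (leaf_depths l ++ leaf_depths r)) =
          (list_sum (leaf_depths l) + list_sum (leaf_depths r) +
           (leaves l + leaves r))%nat).
  rewrite list_sum_map_S, list_sum_app, length_app, !length_leaf_depths. lia.
Qed.

Lemma depth_sum_entropy_bound k t : / 2 <= k < 1 -> kappa_balanced k t ->
  INR (sum_leaf_depths t) * Hent k <= INR (leaves t) * ln (INR (leaves t)).
Proof.
  intros Hk. induction t as [| l IHl r IHr]; simpl.
  - intros _. unfold sum_leaf_depths; simpl. rewrite ln_1. lra.
  - intros (Hl & Hr & Bl & Br). rewrite sum_leaf_depths_Node. simpl leaves.
    specialize (IHl Bl). specialize (IHr Br).
    rewrite !plus_INR in *.
    pose proof (lt_0_INR _ (leaves_pos l)) as Pl.
    pose proof (lt_0_INR _ (leaves_pos r)) as Pr.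
    pose proof (balanced_split_bound k _ _ Hk Pl Pr Hl Hr).
    lra.
Qed.

Theorem theorem4 (kappa : R) (t : tree) (n : nat) :
  / 2 <= kappa < 1 ->
  n = leaves t ->
  (1 <= n)%nat ->
  kappa_balanced kappa t ->
  INR (sum_leaf_depths t) <= INR n * ln (INR n) / Hent kappa.
Proof.
  intros Hk -> _ Hbal.
  apply le_div_of_mul_le.
  - exact (Hent_pos kappa Hk).
  - exact (depth_sum_entropy_bound kappa t Hk Hbal).
Qed.
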